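(* Let $\mathfrak{A}$ be a $(\circ,\wedge,\mathsf{A})$-algebra that is representable by partial functions and atomic, and in which composition is completely left-distributive over joins (for every $a\in\mathfrak{A}$ and every $S\subseteq\mathfrak{A}$ such that $\bigvee S$ exists, $\bigvee\{a\circ s\mid s\in S\}$ exists and equals $a\circ\bigvee S$). Let $\mathrm{At}(\mathfrak{A})$ be the set of atoms of $\mathfrak{A}$, and for $a\in\mathfrak{A}$ define the partial function $\theta(a)$ on $\mathrm{At}(\mathfrak{A})$ by $\theta(a)(x)=x\circ a$ if $x\circ a\neq 0$, and undefined otherwise. Then $x\circ a$ is an atom whenever it is nonzero, and $\theta$ is a complete representation of $\mathfrak{A}$ by partial functions with base $\mathrm{At}(\mathfrak{A})$.
   Context: A $(\circ,\wedge,\mathsf{A})$-algebra is a set with two binary operations $\circ,\wedge$ and one unary operation $\mathsf{A}$. An algebra of partial functions of this signature is a set of partial functions, with base $X$ the union of all their domains and ranges, closed under: composition $f\circ g=\{(x,z)\mid \exists y\,(x,y)\in f,(y,z)\in g\}$ (apply $f$ first, then $g$); intersection; antidomain $\mathsf{A}(f)=\{(x,x)\mid x\in X, x\notin\mathrm{dom}(f)\}$. A representation by partial functions is an isomorphism onto such an algebra. The order is $a\le b\iff a\wedge b=a$, with least element $0=\mathsf{A}(a)\circ a$. An atom is a minimal nonzero element; $\mathfrak{A}$ is atomic if every nonzero element is above an atom. A representation $\theta$ is complete if for every $S$ with $\bigvee S$ existing, $\theta(\bigvee S)=\bigcup\theta[S]$ (equivalently, for every nonempty $S$ with $\bigwedge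 S$ existing, $\theta(\bigwedge S)=\bigcap\theta[S]$). *)

Set Implicit Arguments.

Record alg := Alg {
  car :> Type;
  comp : car -> car -> car;   (* composition: comp f g = "f first, then g" *)
  meet : car -> car -> car;
  ad : car -> car
}.

Definition rel (X : Type) := X -> X -> Prop.
Definition functional (X : Type) (f : rel X) : Prop :=
  forall x y z, f x y -> f x z -> y = z.
Definition req (X : Type) (f g : rel X) : Prop := forall x y, f x y <-> g x y.
Definition rcomp (X : Type) (f g : rel X) : rel X :=
  fun x z => exists y, f x y /\ g y z.
Definition rmeet (X : Type) (f g : rel X) : rel X := fun x y => f x y /\ g x y.
(** antidomain relative to the base X (here the whole type X) *)
Definition rad (X : Type) (f : rel X) : rel X :=
  fun x y => x = y /\ ~ (exists z, f x z).

(** theta is a representation of A by partial functions with base X: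
    an injective homomorphism into partial functions on X, where X is
    the union of the domains and ranges of the theta a. *)
Definition is_rep (A : alg) (X : Type) (th : A -> rel X) : Prop :=
  (forall a, functional (th a)) /\
  (forall a b, req (th (comp A a b)) (rcomp (th a) (th b))) /\
  (forall a b, req (th (meet A a b)) (rmeet (th a) (th b))) /\
  (forall a, req (th (ad A a)) (rad (th a))) /\
  (forall a b, req (th a) (th b) -> a = b) /\
  (forall x : X, exists a y, th a x y \/ th a y x).

Definition representable (A : alg) : Prop :=
  exists (X : Type) (th : A -> rel X), @is_rep A X th.

Definition le (A : alg) (a b : A) : Prop := meet A a b = a.
Definition is_zero (A : alg) (z : A) : Prop := exists a : A, z = comp A (ad A a) a.
Definition atom (A : alg) (x : A) : Prop :=
  ~ is_zero A x /\ forall y, le A y x -> ~ is_zero A y -> y = x.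
Definition atomic (A : alg) : Prop :=
  forall a : A, ~ is_zero A a -> exists x, atom A x /\ le A x a.

Definition is_lub (A : alg) (S : A -> Prop) (j : A) : Prop :=
  (forall s, S s -> le A s j) /\
  (forall u, (forall s, S s -> le A s u) -> le A j u).

Definition left_distr (A : alg) : Prop :=
  forall (a : A) (S : A -> Prop) (j : A), is_lub A S j ->
    is_lub A (fun t => exists s, S s /\ t = comp A a s) (comp A a j).

Definition complete_rep (A : alg) (X : Type) (th : A -> rel X) : Prop :=
  @is_rep A X th /\
  forall (S : A -> Prop) (j : A), is_lub A S j ->
    req (th j) (fun x y => exists s, S s /\ th s x y).

Definition At (A : alg) : Type := { x : A | atom A x }.
Definition theta (A : alg) (a : A) : rel (At A) :=
  fun x y => ~ is_zero A (comp A (proj1_sig x) a) /\ proj1_sig y = comp A (proj1_sig x) a.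

From Stdlib Require Import Classical ProofIrrelevance.

(* Fix any representation r of A by partial functions.  Through r, every
   equation of A becomes a statement about relations, so A obeys all laws of
   partial functions (associativity, monotonicity of composition, ...).

   If x is an atom and y <= x o a is nonzero, the restriction of x to the
   domain of y is nonzero and below x, hence equals x; so y is defined
   wherever x o a is, and y = x o a.  Thus x o a is an atom or 0, and for
   atoms x, a nonzero x o c below x o a must equal it.  This makes theta
   respect composition, meet and antidomain.  Injectivity uses atomicity: if
   a is not below b, the identity on dom a minus dom (a /\ b) is nonzero, and
   an atom below it sees a and b disagree.  Completeness uses left
   distributivity: if x o s = 0 for all s in S, then x o (\/ S) = \/ {x o s}
   = 0. *)

Lemma atom_le_eq {A : alg} {x y : A} :
  atom A y -> le A x y -> ~ is_zero A x -> x = y.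
Proof. intros [_ Hy]; apply Hy. Qed.

Lemma At_eq {A : alg} (u v : At A) : proj1_sig u = proj1_sig v -> u = v.
Proof. destruct u, v; simpl; apply subset_eq_compat. Qed.

Section Representation.

Context {A : alg} {X : Type} {r : A -> rel X}.
Hypothesis Hr : @is_rep A X r.

Lemma rep_functional {a p q q'} : r a p q -> r a p q' -> q = q'.
Proof. apply (proj1 Hr). Qed.

Lemma rep_comp a b p q : r (comp A a b) p q <-> exists y, r a p y /\ r b y q.
Proof. apply (proj1 (proj2 Hr)). Qed.

Lemma rep_meet a b p q : r (meet A a b) p q <-> r a p q /\ r b p q.
Proof. apply (proj1 (proj2 (proj2 Hr))). Qed.

Lemma rep_ad a p q : r (ad A a) p q <-> p = q /\ ~ exists z, r a p z.
Proof. apply (proj1 (proj2 (proj2 (proj2 Hr)))). Qed.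

Lemma rep_inj a b : (forall p q, r a p q <-> r b p q) -> a = b.
Proof. apply (proj1 (proj2 (proj2 (proj2 (proj2 Hr))))). Qed.

Lemma rep_ad_ad a p q : r (ad A (ad A a)) p q <-> p = q /\ exists t, r a p t.
Proof.
  rewrite rep_ad. split.
  - intros [<- Hn]. split; [reflexivity|].
    apply NNPP; intros Ha. apply Hn. exists p. apply rep_ad. auto.
  - intros [<- Ha]. split; [reflexivity|].
    intros [z Hz]. apply rep_ad in Hz as [_ Hz]. auto.
Qed.

Lemma is_zero_rep z : is_zero A z <-> forall p q, ~ r z p q.
Proof.
  split.
  - intros [a ->] p q H. apply rep_comp in H as [y [H1 H2]].
    apply rep_ad in H1 as [<- H1]. eauto.
  - intros H. exists z. apply rep_inj. intros p q; split; intros H1.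
    + exfalso; eapply H; eauto.
    + apply rep_comp in H1 as [y [H1 H2]]. apply rep_ad in H1 as [<- H1].
      exfalso; eauto.
Qed.

Lemma nonzero_rep z : ~ is_zero A z <-> exists p q, r z p q.
Proof.
  rewrite is_zero_rep. split.
  - intros H. apply NNPP. intros Hn. apply H. intros p q Hpq. eauto.
  - intros [p [q H]] Hz. eapply Hz; eauto.
Qed.

Lemma le_rep a b : le A a b <-> forall p q, r a p q -> r b p q.
Proof.
  unfold le; split.
  - intros E p q H. rewrite <- E in H. apply rep_meet in H. tauto.
  - intros H. apply rep_inj. intros p q. rewrite rep_meet. firstorder.
Qed.

Lemma le_antisym a b : le A a b -> le A b a -> a = b.
Proof. rewrite !le_rep. intros H1 H2. apply rep_inj. firstorder. Qed.

Lemma zero_le z b : is_zero A z -> le A z b.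
Proof. rewrite is_zero_rep, le_rep. intros Hz p q H. exfalso; eapply Hz; eauto. Qed.

Lemma nonzero_le {a b} : le A a b -> ~ is_zero A a -> ~ is_zero A b.
Proof.
  rewrite le_rep, !nonzero_rep. intros H [p [q Hpq]]. eauto.
Qed.

Lemma comp_assoc a b c : comp A (comp A a b) c = comp A a (comp A b c).
Proof.
  apply rep_inj; intros p q. rewrite !rep_comp. split.
  - intros [y [H1 H2]]. apply rep_comp in H1 as [w [H1 H3]].
    exists w. split; auto. apply rep_comp; eauto.
  - intros [y [H1 H2]]. apply rep_comp in H2 as [w [H2 H3]].
    exists w. split; auto. apply rep_comp; eauto.
Qed.

Lemma meet_le_l a b : le A (meet A a b) a.
Proof. apply le_rep. intros p q H. apply rep_meet in H. tauto. Qed.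

Lemma meet_le_r a b : le A (meet A a b) b.
Proof. apply le_rep. intros p q H. apply rep_meet in H. tauto. Qed.

Lemma comp_le_r x a b : le A a b -> le A (comp A x a) (comp A x b).
Proof.
  rewrite !le_rep. intros H p q Hc. apply rep_comp in Hc as [w [H1 H2]].
  apply rep_comp. eauto.
Qed.

Lemma zero_comp_l z a : is_zero A z -> is_zero A (comp A z a).
Proof.
  rewrite !is_zero_rep. intros Hz p q H. apply rep_comp in H as [w [H _]].
  eapply Hz; eauto.
Qed.

Lemma zero_comp_r x z : is_zero A z -> is_zero A (comp A x z).
Proof.
  rewrite !is_zero_rep. intros Hz p q H. apply rep_comp in H as [w [_ H]].
  eapply Hz; eauto.
Qed.

Lemma comp_ad_le x a : le A (comp A x (ad A a)) x.
Proof.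
  apply le_rep. intros p q H. apply rep_comp in H as [w [H1 H2]].
  apply rep_ad in H2 as [<- _]. auto.
Qed.

Lemma comp_ad_of_zero {x a} : is_zero A (comp A x a) -> comp A x (ad A a) = x.
Proof.
  intros Hz. apply le_antisym; [apply comp_ad_le|]. apply le_rep.
  intros p q H. apply rep_comp. exists q. split; auto. apply rep_ad.
  split; auto. intros [t Ht]. eapply is_zero_rep; [exact Hz|].
  apply rep_comp; eauto.
Qed.

Lemma zero_comp_ad_comp x a : is_zero A (comp A (comp A x (ad A a)) a).
Proof.
  rewrite comp_assoc. apply zero_comp_r. exists a. reflexivity.
Qed.

Lemma comp_meet_of_eq x a b :
  comp A x a = comp A x b -> comp A x (meet A a b) = comp A x a.
Proof.
  intros E. apply le_antisym; [apply comp_le_r, meet_le_l|]. apply le_rep.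
  intros p q H. assert (Hb : r (comp A x b) p q) by (rewrite <- E; exact H).
  apply rep_comp in H as [w [H1 H2]]. apply rep_comp in Hb as [w' [H1' H2']].
  rewrite (rep_functional H1' H1) in H2'.
  apply rep_comp. exists w. split; auto. apply rep_meet; auto.
Qed.

Lemma atom_comp {x a} : atom A x -> ~ is_zero A (comp A x a) -> atom A (comp A x a).
Proof.
  intros Hx Hnz. split; auto. intros y Hy Hy0. rewrite le_rep in Hy.
  assert (Hxy : comp A (ad A (ad A y)) x = x).
  { apply (atom_le_eq Hx).
    - apply le_rep. intros p q H. apply rep_comp in H as [w [H1 H2]].
      apply rep_ad_ad in H1 as [<- _]. auto.
    - apply nonzero_rep in Hy0 as [p [q H]].
      destruct (proj1 (rep_comp _ _ _ _) (Hy _ _ H)) as [w [H1 _]].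
      apply nonzero_rep. exists p, w. apply rep_comp. exists p.
      split; auto. apply rep_ad_ad. split; eauto. }
  apply rep_inj. intros p q; split; [apply Hy|]. intros H.
  apply rep_comp in H as [w [H1 H2]]. rewrite <- Hxy in H1.
  apply rep_comp in H1 as [p' [Hdom H1]]. apply rep_ad_ad in Hdom as [<- [t Ht]].
  assert (E : t = q).
  { apply Hy, rep_comp in Ht as [w' [H1' H2']].
    rewrite (rep_functional H1' H1) in H2'. exact (rep_functional H2' H2). }
  rewrite <- E. exact Ht.
Qed.

Lemma comp_atom_le_eq {x c a} :
  atom A x -> le A c a -> ~ is_zero A (comp A x c) -> comp A x c = comp A x a.
Proof.
  intros Hx Hca Hnz. apply (comp_le_r x) in Hca.
  apply atom_le_eq; auto. apply atom_comp; auto. exact (nonzero_le Hca Hnz).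
Qed.

Lemma atom_comp_ad {x a} :
  atom A x -> ~ is_zero A (comp A x a) -> is_zero A (comp A x (ad A a)).
Proof.
  intros Hx Hnz. apply NNPP. intros Hnz'. apply Hnz.
  rewrite <- (atom_le_eq Hx (comp_ad_le x a) Hnz'). apply zero_comp_ad_comp.
Qed.

Lemma le_of_atoms a b : atomic A ->
  (forall x, atom A x -> ~ is_zero A (comp A x a) -> comp A x b = comp A x a) ->
  le A a b.
Proof.
  intros Hat H. set (e := comp A (ad A (meet A a b)) (ad A (ad A a))).
  assert (He : forall p q, r e p q <->
            p = q /\ (exists u, r a p u) /\ ~ exists t, r (meet A a b) p t).
  { intros p q. unfold e. rewrite rep_comp. split.
    - intros [w [H1 H2]]. apply rep_ad in H1 as [<- H1].
      apply rep_ad_ad in H2 as [<- H2]. auto.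
    - intros [<- [H1 H2]]. exists p. rewrite rep_ad, rep_ad_ad. auto. }
  assert (Hez : is_zero A e).
  { apply NNPP. intros Hnz. destruct (Hat e Hnz) as [x [Hx Hxe]].
    destruct (proj1 (nonzero_rep x) (proj1 Hx)) as [p [q Hpq]].
    destruct (proj1 (He p q) (proj1 (le_rep x e) Hxe p q Hpq)) as [<- [[u Hu] Hn]].
    assert (Hxa : r (comp A x a) p u) by (apply rep_comp; eauto).
    rewrite <- H in Hxa by (auto; apply nonzero_rep; eauto).
    apply rep_comp in Hxa as [v [Hv Hb]]. rewrite (rep_functional Hv Hpq) in Hb.
    apply Hn. exists u. apply rep_meet. auto. }
  apply le_rep. intros p q Hpq.
  destruct (classic (exists t, r (meet A a b) p t)) as [[t Ht] | Hn].
  - apply rep_meet in Ht as [Ht1 Ht2]. rewrite (rep_functional Hpq Ht1). auto.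
  - exfalso. eapply is_zero_rep; [exact Hez|]. apply He. eauto.
Qed.

End Representation.

Section AtomRepresentation.

Context {A : alg} {X : Type} {r : A -> rel X}.
Hypothesis Hr : @is_rep A X r.

Lemma theta_dom (x : At A) (a : A) :
  (exists y, theta a x y) <-> ~ is_zero A (comp A (proj1_sig x) a).
Proof.
  split; [intros [y [H _]]; exact H|]. intros Hnz.
  exists (exist _ _ (atom_comp Hr (proj2_sig x) Hnz)). split; auto.
Qed.

Lemma theta_functional (a : A) : functional (theta a).
Proof. intros x y z [_ Hy] [_ Hz]. apply At_eq. congruence. Qed.

Lemma theta_comp (a b : A) : req (theta (comp A a b)) (rcomp (theta a) (theta b)).
Proof.
  intros x y; split.
  - intros [Hnz Hy]. rewrite <- (comp_assoc Hr) in Hnz, Hy.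
    assert (Hxa : ~ is_zero A (comp A (proj1_sig x) a))
      by (intros Hz; apply Hnz, (zero_comp_l Hr), Hz).
    destruct (proj2 (theta_dom x a) Hxa) as [w Hw]. exists w. split; auto.
    destruct Hw as [_ Hw]. split; rewrite Hw; auto.
  - intros [w [[_ Hw] [Hnz Hy]]]. rewrite Hw, (comp_assoc Hr) in Hnz, Hy. split; auto.
Qed.

Lemma theta_meet (a b : A) : req (theta (meet A a b)) (rmeet (theta a) (theta b)).
Proof.
  intros [x Hx] y; unfold theta, rmeet; simpl; split.
  - intros [Hnz Hy].
    rewrite <- (comp_atom_le_eq Hr Hx (meet_le_l Hr a b) Hnz),
            <- (comp_atom_le_eq Hr Hx (meet_le_r Hr a b) Hnz). auto.
  - intros [[Hnz Hy] [_ Hy']]. rewrite (comp_meet_of_eq Hr); [auto | congruence].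
Qed.

Lemma theta_ad (a : A) : req (theta (ad A a)) (rad (theta a)).
Proof.
  intros [x Hx] y; unfold rad; rewrite theta_dom; unfold theta; simpl; split.
  - intros [Hnz Hy].
    assert (E : comp A x (ad A a) = x) by exact (atom_le_eq Hx (comp_ad_le Hr x a) Hnz).
    split; [apply At_eq; simpl; congruence|].
    intros Hxa. exact (Hnz (atom_comp_ad Hr Hx Hxa)).
  - intros [<- Hz]. apply NNPP in Hz.
    rewrite (comp_ad_of_zero Hr Hz). split; [apply Hx | reflexivity].
Qed.

Lemma theta_le (a b : A) : atomic A ->
  (forall x y, theta a x y -> theta b x y) -> le A a b.
Proof.
  intros Hat H. apply (le_of_atoms Hr); auto. intros x Hx Hnz.
  destruct (H (exist _ x Hx) (exist _ _ (atom_comp Hr Hx Hnz))) as [_ E];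
    [split; auto | exact (eq_sym E)].
Qed.

Lemma theta_inj (a b : A) : atomic A -> req (theta a) (theta b) -> a = b.
Proof.
  intros Hat H. apply (le_antisym Hr); apply theta_le; auto; apply H.
Qed.

Lemma theta_base (x : At A) : exists a y, theta a x y \/ theta a y x.
Proof.
  destruct x as [x Hx]. set (z := comp A (ad A x) x).
  assert (Hz : is_zero A z) by (exists x; reflexivity).
  exists (ad A z), (exist _ x Hx). left. unfold theta; simpl.
  rewrite (comp_ad_of_zero Hr (zero_comp_r Hr x z Hz)). split; [apply Hx | reflexivity].
Qed.

Lemma theta_join (S : A -> Prop) (j : A) : left_distr A -> is_lub A S j ->
  req (theta j) (fun x y => exists s, S s /\ theta s x y).
Proof.
  intros Hld Hj [x Hx] y; unfold theta; simpl; split.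
  - intros [Hnz Hy].
    destruct (classic (exists s, S s /\ ~ is_zero A (comp A x s)))
      as [[s [Hs Hsz]] | Hn].
    + exists s. rewrite (comp_atom_le_eq Hr Hx (proj1 Hj s Hs) Hsz). auto.
    + exfalso. apply Hnz. set (z := comp A (ad A x) x).
      assert (Hz : is_zero A z) by (exists x; reflexivity).
      assert (Hle : le A (comp A x j) z).
      { apply (proj2 (Hld x S j Hj)). intros t [s [Hs ->]].
        apply (zero_le Hr). apply NNPP. intros Hsz. eauto. }
      apply NNPP. intros Hxj. exact (nonzero_le Hr Hle Hxj Hz).
  - intros [s [Hs [Hsz Hy]]].
    rewrite <- (comp_atom_le_eq Hr Hx (proj1 Hj s Hs) Hsz). auto.
Qed.

End AtomRepresentation.

Theorem mainTheorem13 (A : alg) :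
  representable A -> atomic A -> left_distr A ->
  (forall (x a : A), atom A x -> ~ is_zero A (comp A x a) -> atom A (comp A x a)) /\
  @complete_rep A (At A) (@theta A).
Proof.
  intros [X [r Hr]] Hat Hld. split.
  - intros x a. exact (atom_comp Hr).
  - split; [|intros S j; exact (theta_join Hr S j Hld)].
    refine (conj theta_functional (conj (theta_comp Hr) (conj (theta_meet Hr)
             (conj (theta_ad Hr) (conj _ (theta_base Hr)))))).
    intros a b. exact (theta_inj Hr a b Hat).
Qed.
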